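(* Let $N\ge1$ and $\eta_S,\eta_F,\eta_{FS}\in\mathbb{R}$, and let $(X_1,\dots,X_N)\in\{0,1\}^N$ have distribution $$\Pr(X_1=x_1,\dots,X_N=x_N)=\frac{1}{Z_1}\Big(e^{\eta_F\sum_ix_i}+e^{\eta_S+(\eta_{FS}+\eta_F)\sum_ix_i}\Big),\qquad Z_1=(1+e^{\eta_F})^N+e^{\eta_S}(1+e^{\eta_F+\eta_{FS}})^N$$ (the marginal law of the firm nodes in the graph with $N$ firm nodes of weight $\eta_F$, each joined by an edge of weight $\eta_{FS}$ to a single sector node of weight $\eta_S$). Then $$\sum_{i=1}^NX_i\ \stackrel{d}{=}\ YB_1+(1-Y)B_2,$$ where $Y,B_1,B_2$ are independent, $Y\sim\mathrm{Bernoulli}\big(e^{\eta_S}(1+e^{\eta_F}e^{\eta_{FS}})^N/Z_1\big)$, $B_1\sim\mathrm{Binomial}$ with $N$ trials and success probability $\frac{e^{\eta_F}e^{\eta_{FS}}}{1+e^{\eta_F}e^{\eta_{FS}}}$, and $B_2\sim\mathrm{Binomial}$ with $N$ trials and success probability $\frac{e^{\eta_F}}{1+e^{\eta_F}}$. *)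

From mathcomp Require Import all_boot all_order all_algebra.
From mathcomp Require Import reals sequences exp.
Set Implicit Arguments. Unset Strict Implicit. Unset Printing Implicit Defensive.
Import Order.TTheory GRing.Theory Num.Theory.
Local Open Scope ring_scope.

Section Defs.
Variables (R : realType) (N : nat) (eS eF eFS : R).

Definition nones (x : {ffun 'I_N -> bool}) : nat := \sum_(i < N) (x i : nat).

Definition Z1 : R :=
  (1 + expR eF) ^+ N + expR eS * (1 + expR (eF + eFS)) ^+ N.

Definition pX (x : {ffun 'I_N -> bool}) : R :=
  (expR (eF * (nones x)%:R) + expR (eS + (eFS + eF) * (nones x)%:R)) / Z1.

Definition law_sum (k : nat) : R := \sum_(x | nones x == k) pX x.

End Defs.

Definition bernoulli_pmf (R : realType) (q : R) (y : bool) : R :=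
  if y then q else 1 - q.

Definition binomial_pmf (R : realType) (n : nat) (p : R) (b : nat) : R :=
  'C(n, b)%:R * p ^+ b * (1 - p) ^+ (n - b).

Definition law_mixture (R : realType) (n : nat) (q p1 p2 : R) (k : nat) : R :=
  \sum_(y : bool) \sum_(b1 < n.+1) \sum_(b2 < n.+1)
    (if (y * b1 + (1 - y) * b2)%N == k then
       bernoulli_pmf q y * binomial_pmf n p1 b1 * binomial_pmf n p2 b2
     else 0).

(* Writing a = e^eF, b = e^eFS and s = e^eS, every configuration with k ones
   has probability (a^k + s (ab)^k) / Z1, and there are C(N,k) of them.  On the
   other side, Binomial(N, r/(1+r)) puts mass C(N,k) r^k / (1+r)^N on k, so the
   mixture with weights (1+a)^N / Z1 and s (1+ab)^N / Z1 gives the same value. *)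
From mathcomp Require Import all_boot all_order all_algebra.
From mathcomp Require Import reals sequences exp.
From mathcomp Require Import ring.
Import Order.TTheory GRing.Theory Num.Theory.
Local Open Scope ring_scope.

Lemma nones_card N (x : {ffun 'I_N -> bool}) : nones x = #|[set i | x i]|.
Proof.
rewrite /nones -sum1_card [RHS]big_mkcond.
by apply: eq_bigr => i _; rewrite inE; case: (x i).
Qed.

Lemma card_nones_eq (N k : nat) :
  #|[pred x : {ffun 'I_N -> bool} | nones x == k]| = 'C(N, k).
Proof.
rewrite -[in RHS](card_ord N) -card_draws.
pose indicator (A : {set 'I_N}) := [ffun i => i \in A].
pose support (x : {ffun 'I_N -> bool}) := [set i | x i].
have indicatorK : cancel indicator support.
  by move=> A; apply/setP => i; rewrite inE ffunE.
have supportK : cancel support indicator.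
  by move=> x; apply/ffunP => i; rewrite ffunE inE.
rewrite -(card_image (can_inj supportK)).
apply: eq_card => A; rewrite inE.
apply/imageP/idP => [[x] | cardA].
  by rewrite inE nones_card => /eqP <- ->.
exists (indicator A); last by rewrite indicatorK.
by rewrite inE nones_card -/(support (indicator A)) indicatorK.
Qed.

Lemma law_sumE (R : realType) (N : nat) (eS eF eFS : R) (k : nat) :
  law_sum N eS eF eFS k =
  'C(N, k)%:R * (expR eF ^+ k + expR eS * expR (eF + eFS) ^+ k)
    / Z1 N eS eF eFS.
Proof.
rewrite /law_sum (eq_bigr (fun=> (expR eF ^+ k +
    expR eS * expR (eF + eFS) ^+ k) / Z1 N eS eF eFS)); last first.
  by move=> x /eqP nx; rewrite /pX nx expRD !expRM_natr (addrC eFS).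
by rewrite sumr_const card_nones_eq -[LHS]mulr_natl mulrA.
Qed.

Lemma binomial_pmf_small (R : realType) (n k : nat) (p : R) :
  (n < k)%N -> binomial_pmf n p k = 0.
Proof. by move=> ltnk; rewrite /binomial_pmf bin_small // !mul0r. Qed.

Lemma sum_binomial_pmf (R : realType) (n : nat) (p : R) :
  \sum_(b < n.+1) binomial_pmf n p b = 1.
Proof.
rewrite -(expr1n _ n) -{1}(subrK p 1) exprDn.
by apply: eq_bigr => b _; rewrite /binomial_pmf -mulr_natl; ring.
Qed.

Lemma sum_binomial_pmf_at (R : realType) (n k : nat) (p : R) :
  \sum_(b < n.+1) (if (b : nat) == k then binomial_pmf n p b else 0) =
  binomial_pmf n p k.
Proof.
have [lekn | ltnk] := leqP k n.
  rewrite (bigD1 (Ordinal (lekn : (k < n.+1)%N))) //= eqxx big1 ?addr0 //.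
  by move=> b neqbk; case: eqP => // eq_bk; case/eqP: neqbk; apply: val_inj.
rewrite binomial_pmf_small // big1 // => b _.
by case: eqP => // eq_bk; move: (ltn_ord b); rewrite eq_bk ltnS leqNgt ltnk.
Qed.

(* The branch not selected by Y integrates out since its pmf sums to 1. *)
Lemma law_mixtureE (R : realType) (n : nat) (q p1 p2 : R) (k : nat) :
  law_mixture n q p1 p2 k =
  q * binomial_pmf n p1 k + (1 - q) * binomial_pmf n p2 k.
Proof.
have marginal (c p p' : R) :
    \sum_(b < n.+1) \sum_(b' < n.+1)
      (if (b : nat) == k then c * binomial_pmf n p b * binomial_pmf n p' b'
       else 0) = c * binomial_pmf n p k.
  rewrite -(sum_binomial_pmf_at _ n k p) mulr_sumr; apply: eq_bigr => b _.
  case: eqP => _; last by rewrite big1 ?mulr0.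
  by rewrite -mulr_sumr sum_binomial_pmf mulr1.
rewrite /law_mixture big_bool /= -(marginal q p1 p2) -(marginal (1 - q) p2 p1).
congr (_ + _); first by apply: eq_bigr => b1 _; apply: eq_bigr => b2 _;
  rewrite mul1n mul0n addn0.
rewrite exchange_big; apply: eq_bigr => b2 _; apply: eq_bigr => b1 _.
by rewrite mul0n add0n mul1n; case: eqP => // _; rewrite mulrAC.
Qed.

Lemma binomial_pmf_odds (R : realType) (n k : nat) (r : R) :
  1 + r != 0 ->
  binomial_pmf n (r / (1 + r)) k = 'C(n, k)%:R * r ^+ k / (1 + r) ^+ n.
Proof.
move=> r1_neq0; rewrite /binomial_pmf.
have [lekn | ltnk] := leqP k n; last first.
  by rewrite bin_small // !mul0r.
have -> : 1 - r / (1 + r) = (1 + r)^-1 by field.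
have [m ->] : exists m, n = (k + m)%N by exists (n - k)%N; rewrite subnKC.
rewrite addKn exprD expr_div_n exprVn.
by field; rewrite !expf_neq0.
Qed.

Theorem proposition2 (R : realType) (N : nat) (eS eF eFS : R) (hN : (1 <= N)%N) :
  forall k : nat,
    law_sum N eS eF eFS k =
    law_mixture N
      (expR eS * (1 + expR eF * expR eFS) ^+ N / Z1 N eS eF eFS)
      (expR eF * expR eFS / (1 + expR eF * expR eFS))
      (expR eF / (1 + expR eF)) k.
Proof.
move=> k.
have a_gt0 : 0 < expR eF := expR_gt0 eF.
have ab_gt0 : 0 < expR eF * expR eFS by rewrite mulr_gt0 ?expR_gt0.
have a1_gt0 : 0 < 1 + expR eF by rewrite ltr_wpDl.
have ab1_gt0 : 0 < 1 + expR eF * expR eFS by rewrite ltr_wpDl // ltW.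
have Z1_gt0 : 0 < Z1 N eS eF eFS.
  by rewrite /Z1 expRD addr_gt0 ?mulr_gt0 ?expR_gt0 ?exprn_gt0.
rewrite law_sumE law_mixtureE !binomial_pmf_odds ?gt_eqF //.
rewrite /Z1 expRD in Z1_gt0 *.
by field; rewrite !gt_eqF ?exprn_gt0.
Qed.
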